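(* For real $z<1$, $z\ne0$, \[ -\log(1-z)=\cfrac{2z}{(2-z)-\cfrac{z^2}{3(2-z)-\cfrac{4z^2}{5(2-z)-\cfrac{9z^2}{7(2-z)-\cdots}}}}, \] i.e. the continued fraction with $a(0)=0$, $a(n)=(2n-1)(2-z)$ for $n\ge1$, $b(0)=2z$, $b(n)=-n^2z^2$ for $n\ge1$. Moreover, with $p(n)/q(n)$ its $n$-th convergent, as $n\to\infty$ \[ -\log(1-z)-\frac{p(n)}{q(n)}\sim\frac{2\pi}{\big((1+\sqrt{1-z})^2/z\big)^{2n+1}}. \]
   Context: For sequences $a(n),b(n)$, the continued fraction is $a(0)+\cfrac{b(0)}{a(1)+\cfrac{b(1)}{a(2)+\cdots}}$ and its $n$-th convergent $p(n)/q(n)$ is the truncation ending with $b(n-1)/a(n)$. *)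

From Stdlib Require Import Reals.
From Coquelicot Require Import Coquelicot.
Open Scope R_scope.

(* Convergents p(n)/q(n) of a(0) + b(0)/(a(1) + b(1)/(a(2) + ...)) via the
   standard (Wallis) recurrences with p(-1)=1, q(-1)=0, p(0)=a(0), q(0)=1:
   p(n) = a(n) p(n-1) + b(n-1) p(n-2),  q(n) = a(n) q(n-1) + b(n-1) q(n-2). *)
Fixpoint cf_p (a b : nat -> R) (n : nat) : R :=
  match n with
  | O => a O
  | S O => a 1%nat * a O + b O
  | S (S m as n1) => a (S n1) * cf_p a b n1 + b n1 * cf_p a b m
  end.

Fixpoint cf_q (a b : nat -> R) (n : nat) : R :=
  match n with
  | O => 1
  | S O => a 1%nat
  | S (S m as n1) => a (S n1) * cf_q a b n1 + b n1 * cf_q a b m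
  end.

Definition log_a (z : R) (n : nat) : R :=
  match n with
  | O => 0
  | S _ => (2 * INR n - 1) * (2 - z)
  end.

Definition log_b (z : R) (n : nat) : R :=
  match n with
  | O => 2 * z
  | S _ => - (INR n ^ 2) * z ^ 2
  end.

From Stdlib Require Import Reals Lra Lia Factorial.
From Coquelicot Require Import Coquelicot.
From Stdlib Require Import ssreflect.
Open Scope R_scope.

(* Write [s = sqrt (1 - z)], [alpha = (1 + s)^2] and [beta = (1 - s)^2], so that
   [alpha + beta = 2 (2 - z)] and [alpha beta = z^2].  The denominators are
   [q(n) = n! sum_j cbin j cbin (n - j) beta^j alpha^(n - j)], the coefficients of
   [((1 - beta t) (1 - alpha t))^(-1/2)], and the remainders are
   [-log(1 - z) q(n) - p(n) = n! z^(2n+1) int_0^1 (u (1 - u))^n / (1 - z u)^(n+1) du]: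
   in both cases the right-hand side satisfies the recurrence of the continued fraction.
   Since [u (1 - u) / (1 - z u) <= 1 / alpha] on [[0, 1]], the error is
   [O(n (beta / alpha)^n)].  For the asymptotics, the Wronskian
   [p(n+1) q(n) - p(n) q(n+1) = 2 z^(2n+1) n!^2] writes the error as a tail sum of
   consecutive differences; by Tannery's theorem
   [q(n) / (n! cbin n alpha^n) -> (1 - beta / alpha)^(-1/2)], and Wallis' formula
   [(n + 1) cbin (n + 1) cbin n -> 1 / pi] produces the constant [2 pi]. *)

(* [cbin n = C(2n, n) / 4^n], the n-th Taylor coefficient of [(1 - t)^(-1/2)]. *)
Fixpoint cbin (n : nat) : R :=
  match n with O => 1 | S m => cbin m * (2 * INR m + 1) / (2 * INR m + 2) end.

Lemma cbin_S n : cbin (S n) = cbin n * (2 * INR n + 1) / (2 * INR n + 2).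
Proof. by []. Qed.

Lemma cbin_gt0 n : 0 < cbin n.
Proof.
  elim: n => [|n IH]; rewrite /=; first lra.
  have := pos_INR n => ?; apply: Rdiv_lt_0_compat; nra.
Qed.

Lemma cbin_le1 n : cbin n <= 1.
Proof.
  elim: n => [|n IH]; rewrite /=; first lra.
  have := cbin_gt0 n; have := pos_INR n => ? ?.
  apply: (Rmult_le_reg_r (2 * INR n + 2)); first lra.
  rewrite /Rdiv Rmult_assoc Rinv_l; nra.
Qed.

Lemma cbin_ge_inv n : 1 <= INR (S n) * cbin n.
Proof.
  elim: n => [|n IH]; first by rewrite /=; lra.
  have := cbin_gt0 n; have := pos_INR n => ? ?.
  have -> : INR (S (S n)) * cbin (S n) = INR (S n) * cbin n + cbin n * INR n / (2 * INR n + 2).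
  { rewrite cbin_S !S_INR; field; lra. }
  have : 0 <= cbin n * INR n / (2 * INR n + 2) by apply: Rle_mult_inv_pos; nra.
  lra.
Qed.

(* The ratio [cbin (S k) / cbin k = (2k + 1) / (2k + 2)] increases with [k]. *)
Lemma cbin_exchange k j : (k <= j)%nat -> cbin (S k) * cbin j <= cbin k * cbin (S j).
Proof.
  move=> /le_INR hkj; rewrite !cbin_S.
  have := cbin_gt0 k; have := cbin_gt0 j; have := pos_INR k => ? ? ?.
  have -> : cbin k * (2 * INR k + 1) / (2 * INR k + 2) * cbin j
    = cbin k * cbin j * ((2 * INR k + 1) / (2 * INR k + 2)) by field; lra.
  have -> : cbin k * (cbin j * (2 * INR j + 1) / (2 * INR j + 2))
    = cbin k * cbin j * ((2 * INR j + 1) / (2 * INR j + 2)) by field; lra.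
  apply: Rmult_le_compat_l; first nra.
  apply: (Rmult_le_reg_r ((2 * INR k + 2) * (2 * INR j + 2))); first nra.
  have -> : (2 * INR k + 1) / (2 * INR k + 2) * ((2 * INR k + 2) * (2 * INR j + 2))
    = (2 * INR k + 1) * (2 * INR j + 2) by field; lra.
  have -> : (2 * INR j + 1) / (2 * INR j + 2) * ((2 * INR k + 2) * (2 * INR j + 2))
    = (2 * INR j + 1) * (2 * INR k + 2) by field; lra.
  nra.
Qed.

Lemma cbin_mul_le k j : cbin k * cbin j <= cbin (k + j).
Proof.
  wlog hkj : k j / (k <= j)%nat.
  { move=> H; case: (Nat.le_ge_cases k j) => [|hjk]; first exact: H.
    by rewrite Rmult_comm Nat.add_comm; apply: H. }
  elim: k j hkj => [|k IH] j hkj; first by rewrite /=; lra.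
  apply: Rle_trans (cbin_exchange k j ltac:(lia)) _.
  rewrite Nat.add_succ_comm; apply: IH; lia.
Qed.

Definition wallis_int (m : nat) : R := RInt (fun x => sin x ^ m) 0 (PI / 2).

Lemma ex_RInt_sin_pow m a b : ex_RInt (fun x => sin x ^ m) a b.
Proof. apply: ex_RInt_continuous => x _; apply: ex_derive_continuous; auto_derive; auto. Qed.

(* Integrate [(cos x * sin x ^ (m + 1))' = (m + 1) sin x ^ m - (m + 2) sin x ^ (m + 2)]. *)
Lemma wallis_int_SS m : INR (S (S m)) * wallis_int (S (S m)) = INR (S m) * wallis_int m.
Proof.
  set f := fun x => INR (S m) * sin x ^ m - INR (S (S m)) * sin x ^ S (S m).
  have H : is_RInt f 0 (PI / 2) (minus (cos (PI / 2) * sin (PI / 2) ^ S m) (cos 0 * sin 0 ^ S m)).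
  { apply: (is_RInt_derive (fun x => cos x * sin x ^ S m)) => x _; last first.
    { rewrite /f; apply: ex_derive_continuous; auto_derive; auto. }
    auto_derive; first by [].
    have := sin2_cos2 x; rewrite /Rsqr /f => hsc.
    change (match m with 0%nat => 1 | S _ => INR m + 1 end) with (INR (S m)).
    rewrite !S_INR /=.
    have -> : cos x * (1 * cos x * ((INR m + 1) * sin x ^ m))
      = (INR m + 1) * sin x ^ m * (cos x * cos x) by ring.
    have -> : cos x * cos x = 1 - sin x * sin x by lra.
    ring. }
  have H' : is_RInt f 0 (PI / 2)
              (INR (S m) * wallis_int m - INR (S (S m)) * wallis_int (S (S m))).
  { apply: is_RInt_minus; apply: is_RInt_scal; apply: RInt_correct; exact: ex_RInt_sin_pow. }
  have := is_RInt_unique _ _ _ _ H'; rewrite (is_RInt_unique _ _ _ _ H).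
  rewrite cos_PI2 sin_0 /minus /plus /opp /=; lra.
Qed.

Lemma wallis_int_0 : wallis_int 0 = PI / 2.
Proof. rewrite /wallis_int /= RInt_const /scal /= /mult /=; lra. Qed.

Lemma wallis_int_1 : wallis_int 1 = 1.
Proof.
  have H : is_RInt (fun x => sin x ^ 1) 0 (PI / 2) (minus (- cos (PI / 2)) (- cos 0)).
  { apply: (is_RInt_derive (fun x => - cos x)) => x _.
    - by auto_derive; rewrite // /=; ring.
    - apply: ex_derive_continuous; auto_derive; auto. }
  rewrite /wallis_int (is_RInt_unique _ _ _ _ H) cos_PI2 cos_0 /minus /plus /opp /=; lra.
Qed.

Lemma wallis_int_S_le m : wallis_int (S m) <= wallis_int m.
Proof.
  have := PI_RGT_0 => hpi.
  apply: RInt_le; [lra | exact: ex_RInt_sin_pow | exact: ex_RInt_sin_pow |] => x hx.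
  have h0 : 0 <= sin x by apply: sin_ge_0; lra.
  have h1 : sin x <= 1 by have := SIN_bound x; lra.
  have := pow_le _ m h0; rewrite /=; nra.
Qed.

Lemma wallis_int_even n : wallis_int (2 * n) = cbin n * (PI / 2).
Proof.
  elim: n => [|n IH]; first by rewrite /= wallis_int_0; ring.
  have := wallis_int_SS (2 * n); rewrite IH.
  have -> : S (S (2 * n)) = (2 * S n)%nat by lia.
  have -> : INR (2 * S n) = 2 * INR n + 2 by rewrite mult_INR (S_INR n) /=; ring.
  have -> : INR (S (2 * n)) = 2 * INR n + 1 by rewrite S_INR mult_INR /=; ring.
  have := pos_INR n => ? E; rewrite cbin_S.
  apply: (Rmult_eq_reg_l (2 * INR n + 2)); last lra.
  rewrite E; field; lra.
Qed.

Lemma wallis_int_odd n : wallis_int (2 * n + 1) = / ((2 * INR n + 1) * cbin n).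
Proof.
  elim: n => [|n IH]; first by rewrite /= wallis_int_1; field.
  have := wallis_int_SS (2 * n + 1); rewrite IH.
  have -> : S (S (2 * n + 1)) = (2 * S n + 1)%nat by lia.
  have -> : INR (2 * S n + 1) = 2 * INR n + 3 by rewrite plus_INR mult_INR (S_INR n) /=; ring.
  have -> : INR (S (2 * n + 1)) = 2 * INR n + 2 by rewrite S_INR plus_INR mult_INR /=; ring.
  have := pos_INR n; have := cbin_gt0 n => ? ? E; rewrite cbin_S S_INR.
  apply: (Rmult_eq_reg_l (2 * INR n + 3)); last lra.
  rewrite E; field; lra.
Qed.

Lemma wallis_lower n : / PI <= INR (S n) * cbin (S n) * cbin n.
Proof.
  have := wallis_int_S_le (2 * n); rewrite -Nat.add_1_r wallis_int_even wallis_int_odd => h.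
  have := PI_RGT_0; have := cbin_gt0 n; have := pos_INR n => ? ? ?.
  have {}h : 1 <= (2 * INR n + 1) * cbin n * (cbin n * (PI / 2)).
  { have := Rmult_le_compat_l ((2 * INR n + 1) * cbin n) _ _ ltac:(nra) h.
    rewrite Rinv_r; nra. }
  have -> : INR (S n) * cbin (S n) * cbin n = (2 * INR n + 1) * cbin n ^ 2 / 2.
  { rewrite cbin_S S_INR; field; lra. }
  apply: (Rmult_le_reg_r PI); first lra.
  rewrite Rinv_l; nra.
Qed.

Lemma wallis_upper n :
  INR (S n) * cbin (S n) * cbin n <= / PI * ((2 * INR n + 2) / (2 * INR n + 1)).
Proof.
  have := wallis_int_S_le (2 * n + 1).
  have -> : S (2 * n + 1) = (2 * S n)%nat by lia.
  rewrite wallis_int_even wallis_int_odd => h.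
  have := PI_RGT_0; have := cbin_gt0 n; have := cbin_gt0 (S n); have := pos_INR n => ? ? ? ?.
  have {}h : (2 * INR n + 1) * cbin n * (cbin (S n) * (PI / 2)) <= 1.
  { have := Rmult_le_compat_l ((2 * INR n + 1) * cbin n) _ _ ltac:(nra) h.
    rewrite Rinv_r; nra. }
  apply: (Rmult_le_reg_r ((2 * INR n + 1) * PI)); first nra.
  have -> : / PI * ((2 * INR n + 2) / (2 * INR n + 1)) * ((2 * INR n + 1) * PI)
    = 2 * INR n + 2 by field; lra.
  rewrite S_INR; nra.
Qed.

Lemma is_lim_seq_inv_INR_add a : 0 < a -> is_lim_seq (fun n => / (INR n + a)) 0.
Proof.
  move=> ha.
  have H : is_lim_seq (fun n => INR n + a) p_infty.
  { apply: (is_lim_seq_le_p_loc INR); last exact: is_lim_seq_INR.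
    by exists 0%nat => n _; lra. }
  exact: (is_lim_seq_inv _ _ H).
Qed.

Lemma is_lim_seq_wallis : is_lim_seq (fun n => INR (S n) * cbin (S n) * cbin n) (/ PI).
Proof.
  apply: (is_lim_seq_le_le (fun _ => / PI) _
            (fun n => / PI * (1 + / 2 * / (INR n + / 2)))).
  - move=> n; split; first exact: wallis_lower.
    have := pos_INR n => ?.
    have -> : / PI * (1 + / 2 * / (INR n + / 2)) = / PI * ((2 * INR n + 2) / (2 * INR n + 1)).
    { have := PI_RGT_0 => ?; field; lra. }
    exact: wallis_upper.
  - exact: is_lim_seq_const.
  - have L : is_lim_seq (fun n => / PI * (1 + / 2 * / (INR n + / 2))) (/ PI * (1 + / 2 * 0)).
    { apply: is_lim_seq_mult'; first exact: is_lim_seq_const.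
      apply: is_lim_seq_plus'; first exact: is_lim_seq_const.
      apply: is_lim_seq_mult'; first exact: is_lim_seq_const.
      apply: is_lim_seq_inv_INR_add; lra. }
    by rewrite Rmult_0_r Rplus_0_r Rmult_1_r in L.
Qed.

Lemma is_lim_seq_cbin_div k : is_lim_seq (fun m => cbin m / cbin (m + k)) 1.
Proof.
  elim: k => [|k IH].
  { apply: (is_lim_seq_ext (fun _ => 1)); last exact: is_lim_seq_const.
    move=> m; rewrite Nat.add_0_r; have := cbin_gt0 m => ?; field; lra. }
  have H : is_lim_seq (fun m => 1 + / 2 * / (INR (m + k) + / 2)) (1 + / 2 * 0).
  { apply: is_lim_seq_plus'; first exact: is_lim_seq_const.
    apply: is_lim_seq_mult'; first exact: is_lim_seq_const.
    apply/(is_lim_seq_incr_n (fun m => / (INR m + / 2)) k).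
    apply: is_lim_seq_inv_INR_add; lra. }
  rewrite Rmult_0_r Rplus_0_r in H.
  have := is_lim_seq_mult' _ _ _ _ IH H; rewrite Rmult_1_l.
  apply: is_lim_seq_ext => m; rewrite -plus_n_Sm cbin_S.
  have := cbin_gt0 (m + k); have := cbin_gt0 m; have := pos_INR (m + k) => ? ? ?.
  field; lra.
Qed.

Definition conv (f g : nat -> R) (n : nat) : R := sum_f_R0 (fun j => f j * g (n - j)%nat) n.

Lemma sum_f_R0_scal_l (f : nat -> R) x N : sum_f_R0 (fun i => x * f i) N = x * sum_f_R0 f N.
Proof. by rewrite scal_sum; apply: sum_eq => i _; ring. Qed.

Section ConvRecurrence.

(* [V] and [W] are, up to scaling, the coefficient sequences of [(1 - A t)^(-1/2)] and
   [(1 - B t)^(-1/2)]; their Cauchy product is the coefficient sequence of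
   [((1 - A t) (1 - B t))^(-1/2)], which satisfies a three-term recurrence. *)
Variables (A B : R) (V W : nat -> R).
Hypothesis hV : forall j, INR (S j) * V (S j) = A * ((INR j + / 2) * V j).
Hypothesis hW : forall j, INR (S j) * W (S j) = B * ((INR j + / 2) * W j).

Let X n := conv (fun j => INR j * V j) W n.
Let Y n := conv V (fun k => INR k * W k) n.
Let U n := conv V W n.

Lemma conv_rec_left n : X (S n) = A * (X n + / 2 * U n).
Proof.
  rewrite /X /U /conv decomp_sum /=; last lia.
  rewrite Rmult_0_l Rmult_0_l Rplus_0_l.
  rewrite (sum_eq _ (fun j => A * (INR j * V j * W (n - j)%nat + / 2 * (V j * W (n - j)%nat)))).
  - by rewrite sum_f_R0_scal_l sum_plus sum_f_R0_scal_l.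
  - by move=> i _; rewrite hV; ring.
Qed.

Lemma conv_rec_right n : Y (S n) = B * (Y n + / 2 * U n).
Proof.
  rewrite /Y /U /conv tech5 Nat.sub_diag [INR 0]/= Rmult_0_l Rmult_0_r Rplus_0_r.
  rewrite (sum_eq _ (fun j =>
    B * (V j * (INR (n - j) * W (n - j)%nat) + / 2 * (V j * W (n - j)%nat)))).
  - by rewrite sum_f_R0_scal_l sum_plus sum_f_R0_scal_l.
  - move=> i hi; have -> : (S n - i = S (n - i))%nat by lia.
    by rewrite hW; ring.
Qed.

Lemma conv_left_add_right n : X n + Y n = INR n * U n.
Proof.
  rewrite /X /Y /U /conv -sum_plus -sum_f_R0_scal_l.
  by apply: sum_eq => i hi; rewrite minus_INR; [ring | lia].
Qed.

Lemma conv_rec n : INR (S (S n)) * U (S (S n)) =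
  (2 * INR n + 3) * ((A + B) / 2) * U (S n) - INR (S n) * (A * B) * U n.
Proof.
  have e2 := conv_left_add_right (S (S n)); have e1 := conv_left_add_right (S n).
  have e0 := conv_left_add_right n.
  have x2 := conv_rec_left (S n); have y2 := conv_rec_right (S n).
  have x1 := conv_rec_left n; have y1 := conv_rec_right n.
  rewrite -e2 x2 y2.
  have key : B * X (S n) + A * Y (S n) = INR (S n) * (A * B) * U n.
  { rewrite x1 y1 S_INR; have -> : X n = INR n * U n - Y n by lra. field. }
  rewrite !S_INR in e1 key |- *.
  have ex : X (S n) = (INR n + 1) * U (S n) - Y (S n) by lra.
  rewrite ex in key |- *; nra.
Qed.

End ConvRecurrence.

Lemma cbin_rec_scaled (T : R) j :
  INR (S j) * (cbin (S j) * T ^ S j) = T * ((INR j + / 2) * (cbin j * T ^ j)).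
Proof. rewrite cbin_S S_INR /=; have := pos_INR j => ?; field; lra. Qed.

(* The coefficients of [(1 - t)^(-1/2) (1 - t)^(-1/2) = (1 - t)^(-1)] are all [1]. *)
Lemma conv_cbin n : conv cbin cbin n = 1.
Proof.
  have hc j : INR (S j) * cbin (S j) = 1 * ((INR j + / 2) * cbin j).
  { by have := cbin_rec_scaled 1 j; rewrite !pow1 !Rmult_1_r. }
  suff : conv cbin cbin n = 1 /\ conv cbin cbin (S n) = 1 by case.
  elim: n => [|n [IH1 IH2]]; first by split; rewrite /conv /=; field.
  split => //; have := conv_rec _ _ _ _ hc hc n; rewrite IH1 IH2 => H.
  apply: (Rmult_eq_reg_l (INR (S (S n)))); last exact: not_0_INR.
  rewrite H !S_INR; field.
Qed.

Lemma rec2_ext (c d u v : nat -> R) :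
  (forall n, u (S (S n)) = c n * u (S n) + d n * u n) ->
  (forall n, v (S (S n)) = c n * v (S n) + d n * v n) ->
  u O = v O -> u 1%nat = v 1%nat -> forall n, u n = v n.
Proof.
  move=> hu hv h0 h1 n.
  suff : u n = v n /\ u (S n) = v (S n) by case.
  elim: n => [|n [IH1 IH2]]; first by [].
  by split => //; rewrite hu hv IH1 IH2.
Qed.

Lemma cf_p_SS a b n : cf_p a b (S (S n)) = a (S (S n)) * cf_p a b (S n) + b (S n) * cf_p a b n.
Proof. by []. Qed.

Lemma cf_q_SS a b n : cf_q a b (S (S n)) = a (S (S n)) * cf_q a b (S n) + b (S n) * cf_q a b n.
Proof. by []. Qed.

Lemma cf_wronskian_S a b n :
  cf_p a b (S (S n)) * cf_q a b (S n) - cf_p a b (S n) * cf_q a b (S (S n))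
  = - b (S n) * (cf_p a b (S n) * cf_q a b n - cf_p a b n * cf_q a b (S n)).
Proof. rewrite cf_p_SS cf_q_SS; ring. Qed.

Lemma log_cf_wronskian z n :
  cf_p (log_a z) (log_b z) (S n) * cf_q (log_a z) (log_b z) n
  - cf_p (log_a z) (log_b z) n * cf_q (log_a z) (log_b z) (S n)
  = 2 * z ^ (2 * n + 1) * INR (fact n) ^ 2.
Proof.
  elim: n => [|n IH]; first by rewrite /=; ring.
  rewrite cf_wronskian_S IH /log_b.
  have -> : (2 * S n + 1 = 2 * n + 1 + 2)%nat by lia.
  rewrite (pow_add z (2 * n + 1) 2) /fact -/fact mult_INR; ring.
Qed.

(* The roots of [t^2 - 2 (2 - z) t + z^2], the characteristic polynomial of the
   recurrence of the denominators [cf_q (log_a z) (log_b z) n / n!]. *)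
Definition alpha (z : R) : R := (1 + sqrt (1 - z)) ^ 2.
Definition beta (z : R) : R := (1 - sqrt (1 - z)) ^ 2.

(* [log_den z n = q(n) / n!]; see [log_cf_q]. *)
Definition log_den (z : R) (n : nat) : R :=
  conv (fun j => cbin j * beta z ^ j) (fun j => cbin j * alpha z ^ j) n.

Section LogDen.

Variable z : R.
Hypothesis hz1 : z <= 1.

Lemma alpha_add_beta : (alpha z + beta z) / 2 = 2 - z.
Proof. have := sqrt_sqrt (1 - z) ltac:(lra); rewrite /alpha /beta; nra. Qed.

Lemma alpha_mul_beta : alpha z * beta z = z ^ 2.
Proof.
  have := sqrt_sqrt (1 - z) ltac:(lra); rewrite /alpha /beta => hs.
  have -> : (1 + sqrt (1 - z)) ^ 2 * (1 - sqrt (1 - z)) ^ 2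
    = (1 - sqrt (1 - z) * sqrt (1 - z)) ^ 2 by ring.
  by rewrite hs; ring.
Qed.

Lemma log_den_rec n : INR (S (S n)) * log_den z (S (S n)) =
  (2 * INR n + 3) * (2 - z) * log_den z (S n) - INR (S n) * z ^ 2 * log_den z n.
Proof.
  rewrite -alpha_add_beta -alpha_mul_beta (Rplus_comm (alpha z)) (Rmult_comm (alpha z)) /log_den.
  by apply: conv_rec => j; apply: cbin_rec_scaled.
Qed.

Lemma log_cf_q n : cf_q (log_a z) (log_b z) n = INR (fact n) * log_den z n.
Proof.
  move: n; apply: (rec2_ext (fun n => log_a z (S (S n))) (fun n => log_b z (S n))
    (cf_q (log_a z) (log_b z)) (fun n => INR (fact n) * log_den z n)) => [n|n||].
  - exact: cf_q_SS.
  - rewrite [fact (S (S n))]/fact -/fact [fact (S n)]/fact -/fact !mult_INR.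
    have -> : INR (S (S n)) * (INR (S n) * INR (fact n)) * log_den z (S (S n))
      = INR (S n) * INR (fact n) * (INR (S (S n)) * log_den z (S (S n))) by ring.
    rewrite log_den_rec /log_a /log_b !S_INR; ring.
  - by rewrite /log_den /conv /=; ring.
  - rewrite /log_den /conv /= -alpha_add_beta; field.
Qed.

End LogDen.

Section LogIntegral.

Variable z : R.
Hypothesis hz1 : z < 1.

Definition log_kernel (n : nat) (u : R) : R := (u * (1 - u)) ^ n / (1 - z * u) ^ S n.
Definition log_int (n : nat) : R := RInt (log_kernel n) 0 1.

Lemma one_sub_mul_gt0 u : 0 <= u <= 1 -> 0 < 1 - z * u.
Proof. move=> [h0 h1]; case: (Req_dec u 1) => [->|?]; nra. Qed.

Lemma Rmin_0_1 : Rmin 0 1 = 0. Proof. by rewrite Rmin_left; lra. Qed.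
Lemma Rmax_0_1 : Rmax 0 1 = 1. Proof. by rewrite Rmax_right; lra. Qed.

Lemma continuous_log_kernel n u : 0 <= u <= 1 -> continuous (log_kernel n) u.
Proof.
  move=> /one_sub_mul_gt0 hu; apply: ex_derive_continuous; rewrite /log_kernel; auto_derive.
  have hp k : (1 + - (z * u)) ^ k <> 0 by apply: pow_nonzero; lra.
  by repeat split; repeat apply: Rmult_integral_contrapositive_currified; auto; lra.
Qed.

Lemma ex_RInt_log_kernel n : ex_RInt (log_kernel n) 0 1.
Proof.
  apply: ex_RInt_continuous => u; rewrite Rmin_0_1 Rmax_0_1.
  exact: continuous_log_kernel.
Qed.

(* The combination of kernels is the derivative of [G], which vanishes at [0] and [1]. *)
Lemma log_int_rec n :
  INR (S (S n)) * z ^ 2 * log_int (S (S n)) - (2 * INR n + 3) * (2 - z) * log_int (S n)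
  + INR (S n) * log_int n = 0.
Proof.
  set f := fun u => INR (S (S n)) * z ^ 2 * log_kernel (S (S n)) u
    - (2 * INR n + 3) * (2 - z) * log_kernel (S n) u + INR (S n) * log_kernel n u.
  set G := fun u => (u * (1 - u)) ^ S n * (1 - 2 * u + z * u ^ 2) / (1 - z * u) ^ S (S n).
  have H1 : is_RInt f 0 1 (minus (G 1) (G 0)).
  { apply: is_RInt_derive => u; rewrite Rmin_0_1 Rmax_0_1 => hu; last first.
    { apply: continuous_plus; first apply: continuous_minus;
        apply: continuous_scal_r; exact: continuous_log_kernel. }
    have hv := one_sub_mul_gt0 _ hu.
    have hp k : (1 + - (z * u)) ^ k <> 0 by apply: pow_nonzero; lra.
    rewrite /G; auto_derive.
    { by repeat split; repeat apply: Rmult_integral_contrapositive_currified; auto; lra. }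
    rewrite /f /log_kernel.
    change (match n with 0%nat => 1 | S _ => INR n + 1 end) with (INR (S n)).
    rewrite !S_INR /=.
    have hY : (1 - z * u) ^ n <> 0 by apply: pow_nonzero; lra.
    have -> : 1 + - (z * u) = 1 - z * u by ring.
    set Y := (1 - z * u) ^ n; set X := (u * (1 - u)) ^ n.
    field; repeat split; auto; lra. }
  have H2 : is_RInt f 0 1 (INR (S (S n)) * z ^ 2 * log_int (S (S n))
      - (2 * INR n + 3) * (2 - z) * log_int (S n) + INR (S n) * log_int n).
  { apply: is_RInt_plus; first apply: is_RInt_minus;
      apply: is_RInt_scal; apply: RInt_correct; exact: ex_RInt_log_kernel. }
  rewrite -(is_RInt_unique _ _ _ _ H2) (is_RInt_unique _ _ _ _ H1).
  rewrite /G /minus /plus /opp /= Rmult_0_r Rmult_1_r Rminus_0_r.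
  field; repeat split; try apply: pow_nonzero; lra.
Qed.

Lemma log_int_0 : z * log_int 0 = - ln (1 - z).
Proof.
  have H1 : is_RInt (fun u => z * log_kernel 0 u) 0 1
              (minus (- ln (1 - z * 1)) (- ln (1 - z * 0))).
  { apply: (is_RInt_derive (fun u => - ln (1 - z * u))) => u; rewrite Rmin_0_1 Rmax_0_1 => hu;
      have hv := one_sub_mul_gt0 _ hu.
    - by auto_derive; [lra | rewrite /log_kernel /=; field; lra].
    - by apply: continuous_scal_r; exact: continuous_log_kernel. }
  have H2 : is_RInt (fun u => z * log_kernel 0 u) 0 1 (z * log_int 0).
  { by apply: is_RInt_scal; apply: RInt_correct; exact: ex_RInt_log_kernel. }
  rewrite -(is_RInt_unique _ _ _ _ H2) (is_RInt_unique _ _ _ _ H1).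
  by rewrite /minus /plus /opp /= Rmult_0_r Rminus_0_r ln_1 Rmult_1_r; ring.
Qed.

Lemma log_int_1 : z ^ 3 * log_int 1 = (2 - z) * (- ln (1 - z)) - 2 * z.
Proof.
  set F := fun u => (1 - z * u) - (2 - z) * ln (1 - z * u) - (1 - z) / (1 - z * u).
  have H1 : is_RInt (fun u => z ^ 3 * log_kernel 1 u) 0 1 (minus (F 1) (F 0)).
  { apply: (is_RInt_derive F) => u; rewrite Rmin_0_1 Rmax_0_1 => hu;
      have hv := one_sub_mul_gt0 _ hu.
    - rewrite /F; auto_derive; first by repeat split; lra.
      by rewrite /log_kernel /=; field; lra.
    - by apply: continuous_scal_r; exact: continuous_log_kernel. }
  have H2 : is_RInt (fun u => z ^ 3 * log_kernel 1 u) 0 1 (z ^ 3 * log_int 1).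
  { by apply: is_RInt_scal; apply: RInt_correct; exact: ex_RInt_log_kernel. }
  rewrite -(is_RInt_unique _ _ _ _ H2) (is_RInt_unique _ _ _ _ H1).
  rewrite /F /minus /plus /opp /= Rmult_0_r Rminus_0_r ln_1 Rmult_1_r; field; lra.
Qed.

Lemma log_cf_error n :
  - ln (1 - z) * cf_q (log_a z) (log_b z) n - cf_p (log_a z) (log_b z) n
  = INR (fact n) * z ^ (2 * n + 1) * log_int n.
Proof.
  move: n; apply: (rec2_ext (fun n => log_a z (S (S n))) (fun n => log_b z (S n))
    (fun n => - ln (1 - z) * cf_q (log_a z) (log_b z) n - cf_p (log_a z) (log_b z) n)
    (fun n => INR (fact n) * z ^ (2 * n + 1) * log_int n)) => [n|n||].
  - by rewrite cf_p_SS cf_q_SS; ring.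
  - have hrec := log_int_rec n.
    rewrite [fact (S (S n))]/fact -/fact [fact (S n)]/fact -/fact !mult_INR.
    have -> : (2 * S (S n) + 1 = 2 * n + 1 + 2 + 2)%nat by lia.
    have -> : (2 * S n + 1 = 2 * n + 1 + 2)%nat by lia.
    rewrite !pow_add.
    apply: Rminus_diag_uniq.
    rewrite -(Rmult_0_r (INR (S n) * INR (fact n) * z ^ n * z ^ n * z ^ 3)) -hrec.
    rewrite /log_a /log_b !S_INR; ring.
  - by rewrite /= -log_int_0; ring.
  - have := log_int_1; rewrite /=; nra.
Qed.

End LogIntegral.

Lemma ex_series_geom_bound (a : nat -> R) M r : 0 <= r < 1 ->
  (forall k, Rabs (a k) <= M * r ^ k) -> ex_series (fun k => Rabs (a k)).
Proof.
  move=> hr ha; apply: (ex_series_le _ (fun k => M * r ^ k)).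
  - by move=> k; rewrite /norm /= /abs /= Rabs_Rabsolu.
  - by apply: ex_series_scal_l; apply: ex_series_geom; rewrite Rabs_pos_eq; lra.
Qed.

Lemma Series_geom_scal M r : 0 <= r < 1 -> Series (fun k => M * r ^ k) = M / (1 - r).
Proof.
  move=> hr; rewrite Series_scal_l (is_series_unique _ _ (is_series_geom r _)).
  - by rewrite /Rdiv.
  - by rewrite Rabs_pos_eq; lra.
Qed.

Lemma Series_abs_le_geom (a : nat -> R) M r : 0 <= r < 1 ->
  (forall k, Rabs (a k) <= M * r ^ k) -> Rabs (Series a) <= M / (1 - r).
Proof.
  move=> hr ha; apply: Rle_trans (Series_Rabs _ (ex_series_geom_bound _ _ _ hr ha)) _.
  rewrite -Series_geom_scal //; apply: Series_le.
  - by move=> k; split; [exact: Rabs_pos | exact: ha].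
  - by apply: ex_series_scal_l; apply: ex_series_geom; rewrite Rabs_pos_eq; lra.
Qed.

Lemma Rabs_Series_le_head (a : nat -> R) M r K : 0 <= r < 1 ->
  (forall k, Rabs (a k) <= M * r ^ k) ->
  Rabs (Series a) <= Rabs (sum_f_R0 a K) + M * r ^ S K / (1 - r).
Proof.
  move=> hr ha.
  have ex_a := ex_series_Rabs _ (ex_series_geom_bound _ _ _ hr ha).
  rewrite (Series_incr_n a (S K)); [|lia|exact: ex_a].
  apply: Rle_trans (Rabs_triang _ _) _; apply: Rplus_le_compat_l.
  apply: Series_abs_le_geom => // k.
  by rewrite Rmult_assoc -pow_add; apply: ha.
Qed.

Lemma is_lim_seq_sum_f_R0 (f : nat -> nat -> R) (g : nat -> R) K :
  (forall k, is_lim_seq (fun n => f n k) (g k)) ->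
  is_lim_seq (fun n => sum_f_R0 (f n) K) (sum_f_R0 g K).
Proof.
  move=> hf; elim: K => [|K IH]; first exact: hf.
  exact: is_lim_seq_plus' IH (hf (S K)).
Qed.

Lemma is_lim_seq_Series_dominated_0 (h : nat -> nat -> R) M r :
  0 <= r < 1 -> (forall n k, Rabs (h n k) <= M * r ^ k) ->
  (forall k, is_lim_seq (fun n => h n k) 0) -> is_lim_seq (fun n => Series (h n)) 0.
Proof.
  move=> hr hh hlim; apply/is_lim_seq_spec => eps.
  have htail : is_lim_seq (fun K => M * r / (1 - r) * r ^ K) 0.
  { have : Rabs r < 1 by rewrite Rabs_pos_eq; lra.
    move=> /is_lim_seq_geom /(is_lim_seq_scal_l _ (M * r / (1 - r))).
    by rewrite [Rbar_mult _ _]/= Rmult_0_r. }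
  have [K hK] := proj2 (is_lim_seq_spec _ _) htail (pos_div_2 eps).
  have hsum : is_lim_seq (fun n => sum_f_R0 (h n) K) 0.
  { have := is_lim_seq_sum_f_R0 _ _ K hlim; rewrite sum_cte Rmult_0_l //. }
  have [N hN] := proj2 (is_lim_seq_spec _ _) hsum (pos_div_2 eps).
  exists N => n hn; rewrite Rminus_0_r.
  have := Rabs_Series_le_head (h n) M r K hr (hh n).
  have := hN n hn; have := hK K (Nat.le_refl K); rewrite !Rminus_0_r [pos (pos_div_2 eps)]/=.
  have -> : M * r / (1 - r) * r ^ K = M * r ^ S K / (1 - r) by rewrite /=; field; lra.
  have := Rle_abs (M * r ^ S K / (1 - r)); lra.
Qed.

Lemma is_lim_seq_Series_dominated (f : nat -> nat -> R) (g : nat -> R) M r :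
  0 <= r < 1 -> (forall n k, Rabs (f n k) <= M * r ^ k) ->
  (forall k, is_lim_seq (fun n => f n k) (g k)) ->
  is_lim_seq (fun n => Series (f n)) (Series g).
Proof.
  move=> hr hf hlim.
  have hg k : Rabs (g k) <= M * r ^ k.
  { exact: (is_lim_seq_le _ _ _ _ (fun n => hf n k) (is_lim_seq_abs _ _ (hlim k))
              (is_lim_seq_const _)). }
  have ex_g := ex_series_Rabs _ (ex_series_geom_bound _ _ _ hr hg).
  have h0 : is_lim_seq (fun n => Series (fun k => f n k - g k)) 0.
  { apply: (is_lim_seq_Series_dominated_0 _ (2 * M) r) => // [n k | k].
    - have := Rabs_triang (f n k) (- g k); rewrite Rabs_Ropp /Rminus.
      have := hf n k; have := hg k; lra.
    - have := is_lim_seq_minus' _ _ _ _ (hlim k) (is_lim_seq_const (g k)).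
      by rewrite Rminus_eq_0. }
  have := is_lim_seq_plus' _ _ _ _ (is_lim_seq_const (Series g)) h0.
  rewrite Rplus_0_r; apply: is_lim_seq_ext => n.
  rewrite Series_minus //; first ring.
  exact: ex_series_Rabs (ex_series_geom_bound _ _ _ hr (hf n)).
Qed.

Lemma is_series_trunc (a : nat -> R) n :
  is_series (fun k => if (k <=? n)%nat then a k else 0) (sum_f_R0 a n).
Proof.
  apply/is_series_Reals/is_lim_seq_Reals.
  apply: (is_lim_seq_ext_loc (fun _ => sum_f_R0 a n)); last exact: is_lim_seq_const.
  exists n => N hN; elim: N hN => [|N IH] hN.
  - have -> : n = O by lia.
    by rewrite /=.
  - case: (Nat.eq_dec n (S N)) => [<-|hne].
    + apply: sum_eq => i hi.
      by have -> : (i <=? n)%nat = true by apply/Nat.leb_le.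
    + rewrite tech5; have -> : (S N <=? n)%nat = false by apply/Nat.leb_gt; lia.
      by rewrite Rplus_0_r IH //; lia.
Qed.

Lemma is_lim_seq_bounded (u : nat -> R) (l : R) :
  is_lim_seq u l -> exists M, forall n, Rabs (u n) <= M.
Proof.
  move=> /is_lim_seq_spec /(_ (mkposreal 1 Rlt_0_1)) [N hN] /=.
  have [M hM] : exists M, forall n, (n < N)%nat -> Rabs (u n) <= M.
  { elim: (N) => [|N' [M hM]]; first by exists 0 => n; lia.
    exists (Rmax M (Rabs (u N'))) => n hn.
    case: (Nat.eq_dec n N') => [->|ne]; first exact: Rmax_r.
    apply: Rle_trans (Rmax_l _ _); apply: hM; lia. }
  exists (Rmax M (Rabs l + 1)) => n.
  case: (Compare_dec.le_lt_dec N n) => hn.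
  - have := hN n hn; have := Rabs_triang_inv (u n) l; have := Rmax_r M (Rabs l + 1).
    rewrite /=; lra.
  - exact: Rle_trans (hM n hn) (Rmax_l _ _).
Qed.

Lemma is_lim_seq_INR_geom r : 0 <= r < 1 -> is_lim_seq (fun n => INR (S n) * r ^ n) 0.
Proof.
  move=> hr; case: (Req_dec r 0) => [->|hr0].
  { apply: (is_lim_seq_ext_loc (fun _ => 0)); last exact: is_lim_seq_const.
    by exists 1%nat => -[|n] hn; [lia | rewrite /=; ring]. }
  apply/is_lim_seq_abs_0/ex_series_lim_0.
  apply: (ex_series_DAlembert _ r); first lra.
  - move=> n; apply: Rmult_integral_contrapositive_currified; first exact: not_0_INR.
    by apply: pow_nonzero.
  - apply: (is_lim_seq_ext (fun n => r * (1 + / (INR n + 1)))).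
    + move=> n; have := pos_INR n; have := pow_lt r n ltac:(lra) => ? ?.
      rewrite !S_INR /= Rabs_pos_eq; first by field; lra.
      by apply: Rle_mult_inv_pos; [apply: Rmult_le_pos; nra | nra].
    + have L : is_lim_seq (fun n => r * (1 + / (INR n + 1))) (r * (1 + 0)).
      { apply: is_lim_seq_mult'; first exact: is_lim_seq_const.
        apply: is_lim_seq_plus'; first exact: is_lim_seq_const.
        apply: is_lim_seq_inv_INR_add; lra. }
      by rewrite Rplus_0_r Rmult_1_r in L.
Qed.

Lemma is_series_telescope (x : nat -> R) (L : R) n :
  is_lim_seq x L -> is_series (fun j => x (S (n + j)) - x (n + j)%nat) (L - x n).
Proof.
  move=> hx; apply/is_series_Reals/is_lim_seq_Reals.
  apply: (is_lim_seq_ext (fun N => x (S (n + N)) - x n)).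
  { move=> N; elim: N => [|N IH]; first by rewrite /= Nat.add_0_r.
    by rewrite tech5 -IH -plus_n_Sm; ring. }
  apply: is_lim_seq_minus'; last exact: is_lim_seq_const.
  apply: (is_lim_seq_ext (fun N => x (N + S n)%nat)).
  { by move=> N; rewrite -plus_n_Sm Nat.add_comm. }
  exact: (proj1 (is_lim_seq_incr_n _ _ _) hx).
Qed.

Lemma is_lim_seq_Series_shift_geom (F : nat -> R) (c r : R) : 0 <= r < 1 -> is_lim_seq F c ->
  is_lim_seq (fun n => Series (fun j => F (n + j)%nat * r ^ j)) (c / (1 - r)).
Proof.
  move=> hr hF; have [M hM] := is_lim_seq_bounded _ _ hF.
  rewrite -Series_geom_scal //.
  apply: (is_lim_seq_Series_dominated _ _ M r) => // [n k | k].
  - rewrite Rabs_mult (Rabs_pos_eq (r ^ k)); last by apply: pow_le; lra.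
    by apply: Rmult_le_compat_r; [apply: pow_le; lra | exact: hM].
  - apply: is_lim_seq_mult'; last exact: is_lim_seq_const.
    apply: (is_lim_seq_ext (fun m => F (m + k)%nat)).
    { by move=> m; rewrite Nat.add_comm. }
    exact: (proj1 (is_lim_seq_incr_n _ _ _) hF).
Qed.

Section CbinSeries.

Variable r : R.
Hypothesis hr : 0 <= r < 1.

Lemma cbin_geom_bound k : Rabs (cbin k * r ^ k) <= 1 * r ^ k.
Proof.
  have := cbin_le1 k; have := cbin_gt0 k; have := pow_le r k ltac:(lra) => ? ? ?.
  rewrite Rabs_pos_eq; nra.
Qed.

Lemma ex_series_cbin_geom : ex_series (fun k => cbin k * r ^ k).
Proof. exact: ex_series_Rabs (ex_series_geom_bound _ _ _ hr cbin_geom_bound). Qed.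

Lemma Series_cbin_geom_sq :
  Series (fun k => cbin k * r ^ k) * Series (fun k => cbin k * r ^ k) = / (1 - r).
Proof.
  have hpos k : 0 <= cbin k * r ^ k.
  { by have := cbin_gt0 k; have := pow_le r k ltac:(lra); nra. }
  have H := is_series_mult_pos _ _ _ _ (Series_correct _ ex_series_cbin_geom)
              (Series_correct _ ex_series_cbin_geom) hpos hpos.
  have e n : sum_f_R0 (fun k => cbin k * r ^ k * (cbin (n - k) * r ^ (n - k))) n = r ^ n.
  { rewrite -[r ^ n]Rmult_1_r -(conv_cbin n) /conv -sum_f_R0_scal_l.
    apply: sum_eq => i hi.
    have -> : r ^ n = r ^ i * r ^ (n - i) by rewrite -pow_add; f_equal; lia.
    ring. }
  rewrite -(is_series_unique _ _ (is_series_ext _ _ _ e H)).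
  by apply: is_series_unique; apply: is_series_geom; rewrite Rabs_pos_eq; lra.
Qed.

Lemma conv_cbin_geom_ge n : cbin n <= conv (fun k => cbin k * r ^ k) cbin n.
Proof.
  have hpos j : 0 <= cbin j * r ^ j * cbin (n - j).
  { apply: Rmult_le_pos; last exact: Rlt_le (cbin_gt0 _).
    by apply: Rmult_le_pos; [exact: Rlt_le (cbin_gt0 _) | apply: pow_le; lra]. }
  case: n hpos => [|n] hpos; first by rewrite /conv /=; lra.
  rewrite /conv decomp_sum; last lia.
  have := cond_pos_sum _ (Nat.pred (S n)) (fun i => hpos (S i)).
  rewrite Nat.sub_0_r [cbin O]/= pow_O; lra.
Qed.

Definition conv_cbin_geom_ratio (n k : nat) : R :=
  if (k <=? n)%nat then cbin k * cbin (n - k) / cbin n * r ^ k else 0.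

Lemma Series_conv_cbin_geom_ratio n :
  Series (conv_cbin_geom_ratio n) = conv (fun k => cbin k * r ^ k) cbin n / cbin n.
Proof.
  rewrite (is_series_unique _ _ (is_series_trunc _ n)) /conv /Rdiv.
  rewrite Rmult_comm -sum_f_R0_scal_l; apply: sum_eq => k _; ring.
Qed.

Lemma conv_cbin_geom_ratio_bound n k : Rabs (conv_cbin_geom_ratio n k) <= 1 * r ^ k.
Proof.
  have := pow_le r k ltac:(lra) => ?.
  rewrite /conv_cbin_geom_ratio; case: (Nat.leb_spec k n) => hkn; last by rewrite Rabs_R0; lra.
  have := cbin_gt0 k; have := cbin_gt0 (n - k); have := cbin_gt0 n => ? ? ?.
  have := cbin_mul_le k (n - k); have -> : (k + (n - k) = n)%nat by lia.
  move=> hmul; rewrite Rabs_pos_eq; last first.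
  { by apply: Rmult_le_pos => //; apply: Rlt_le; apply: Rdiv_lt_0_compat; nra. }
  apply: Rmult_le_compat_r => //.
  apply: (Rmult_le_reg_r (cbin n)) => //; rewrite /Rdiv Rmult_assoc Rinv_l; lra.
Qed.

Lemma is_lim_seq_conv_cbin_geom :
  is_lim_seq (fun n => conv (fun k => cbin k * r ^ k) cbin n / cbin n)
    (Series (fun k => cbin k * r ^ k)).
Proof.
  apply: (is_lim_seq_ext (fun n => Series (conv_cbin_geom_ratio n))).
  { exact: Series_conv_cbin_geom_ratio. }
  apply: (is_lim_seq_Series_dominated _ _ 1 r) => // [n k | k].
  { exact: conv_cbin_geom_ratio_bound. }
  apply/(is_lim_seq_incr_n _ k).
  apply: (is_lim_seq_ext (fun n => cbin k * r ^ k * (cbin n / cbin (n + k)))).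
  { move=> n; rewrite /conv_cbin_geom_ratio.
    have -> : (k <=? n + k)%nat = true by apply/Nat.leb_le; lia.
    have -> : (n + k - k = n)%nat by lia.
    have := cbin_gt0 (n + k) => ?; field; lra. }
  have := is_lim_seq_scal_l _ (cbin k * r ^ k) _ (is_lim_seq_cbin_div k).
  by rewrite /= Rmult_1_r.
Qed.

End CbinSeries.

Section LogContinuedFraction.

Variable z : R.
Hypotheses (hz1 : z < 1) (hz0 : z <> 0).

Let L := - ln (1 - z).
Let p := cf_p (log_a z) (log_b z).
Let q := cf_q (log_a z) (log_b z).
Let r := beta z / alpha z.
Let tau n := conv (fun k => cbin k * r ^ k) cbin n / cbin n.

Lemma sqrt_one_sub_gt0 : 0 < sqrt (1 - z).
Proof. apply: sqrt_lt_R0; lra. Qed.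

Lemma alpha_gt0 : 0 < alpha z.
Proof. have := sqrt_one_sub_gt0; rewrite /alpha; nra. Qed.

Lemma ratio_bounds : 0 <= r < 1.
Proof.
  have := sqrt_one_sub_gt0; have := alpha_gt0 => ? hs; split.
  - by apply: Rle_mult_inv_pos => //; rewrite /beta; apply: pow2_ge_0.
  - apply: (Rmult_lt_reg_r (alpha z)) => //.
    rewrite /r /Rdiv Rmult_assoc Rinv_l; last lra.
    rewrite /alpha /beta; nra.
Qed.

Lemma log_den_conv n : log_den z n = alpha z ^ n * conv (fun k => cbin k * r ^ k) cbin n.
Proof.
  have := alpha_gt0 => ?.
  rewrite /log_den /conv -sum_f_R0_scal_l; apply: sum_eq => j hj.
  have -> : alpha z ^ n = alpha z ^ (n - j) * alpha z ^ j by rewrite -pow_add; f_equal; lia.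
  rewrite /r /Rdiv Rpow_mult_distr pow_inv; field; apply: pow_nonzero; lra.
Qed.

Lemma log_den_ge n : cbin n * alpha z ^ n <= log_den z n.
Proof.
  have := pow_lt _ n alpha_gt0; have := conv_cbin_geom_ge r ratio_bounds n => ? ?.
  rewrite log_den_conv; nra.
Qed.

Lemma log_den_gt0 n : 0 < log_den z n.
Proof.
  have := log_den_ge n; have := cbin_gt0 n; have := pow_lt _ n alpha_gt0; nra.
Qed.

Lemma log_cf_q_gt0 n : 0 < q n.
Proof.
  rewrite /q log_cf_q; last lra.
  apply: Rmult_lt_0_compat; [exact/lt_0_INR/lt_O_fact | exact: log_den_gt0].
Qed.

Lemma log_cf_error_div n : L - p n / q n = z ^ (2 * n + 1) * log_int z n / log_den z n.
Proof.
  have := log_cf_error z hz1 n; rewrite -/L -/p -/q => herr.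
  have := log_cf_q_gt0 n; have := log_den_gt0 n => ? ?.
  have : 0 < INR (fact n) by exact/lt_0_INR/lt_O_fact.
  have -> : L - p n / q n = (L * q n - p n) / q n by field; lra.
  rewrite herr /q log_cf_q; [move=> ?; field; lra | lra].
Qed.

Let K := 1 + / (1 - z).

Lemma kernel_base_le u : 0 <= u <= 1 -> u * (1 - u) / (1 - z * u) <= / alpha z.
Proof.
  move=> hu; have := one_sub_mul_gt0 z hz1 u hu; have := alpha_gt0 => ? ?.
  apply: (Rmult_le_reg_r ((1 - z * u) * alpha z)); first nra.
  have -> : u * (1 - u) / (1 - z * u) * ((1 - z * u) * alpha z) = u * (1 - u) * alpha z.
  { field; lra. }
  have -> : / alpha z * ((1 - z * u) * alpha z) = 1 - z * u by field; lra.
  have hs := sqrt_sqrt (1 - z) ltac:(lra).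
  have : 1 - z * u - u * (1 - u) * alpha z = ((1 + sqrt (1 - z)) * u - 1) ^ 2.
  { rewrite /alpha; set s := sqrt (1 - z) in hs |- *.
    have -> : z = 1 - s * s by lra.
    ring. }
  have := pow2_ge_0 ((1 + sqrt (1 - z)) * u - 1); lra.
Qed.

Lemma inv_one_sub_mul_le u : 0 <= u <= 1 -> / (1 - z * u) <= K.
Proof.
  move=> hu; have := one_sub_mul_gt0 z hz1 u hu => hv.
  have : 0 < / (1 - z) by apply: Rinv_0_lt_compat; lra.
  rewrite /K; case: (Rle_dec z 0) => hz.
  - have : / (1 - z * u) <= 1 by rewrite -Rinv_1; apply: Rinv_le_contravar; nra.
    lra.
  - have : / (1 - z * u) <= / (1 - z) by apply: Rinv_le_contravar; nra.
    lra.
Qed.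

Lemma log_kernel_bound n u : 0 <= u <= 1 -> 0 <= log_kernel z n u <= K * (/ alpha z) ^ n.
Proof.
  move=> hu; have hv := one_sub_mul_gt0 z hz1 u hu.
  have hb0 : 0 <= u * (1 - u) / (1 - z * u) by apply: Rle_mult_inv_pos; nra.
  have hinv : 0 <= / (1 - z * u) by apply/Rlt_le/Rinv_0_lt_compat.
  have -> : log_kernel z n u = (u * (1 - u) / (1 - z * u)) ^ n * / (1 - z * u).
  { rewrite /log_kernel /Rdiv (Rpow_mult_distr (u * (1 - u))) pow_inv /=; field.
    by split; [lra | apply: pow_nonzero; lra]. }
  have := pow_le _ n hb0; have := pow_incr _ _ n (conj hb0 (kernel_base_le u hu)).
  have := inv_one_sub_mul_le u hu => ? ? ?.
  split; first exact: Rmult_le_pos.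
  by rewrite Rmult_comm; apply: Rmult_le_compat; lra.
Qed.

Lemma log_int_bound n : 0 <= log_int z n <= K * (/ alpha z) ^ n.
Proof.
  split.
  - apply: RInt_ge_0; [lra | exact: ex_RInt_log_kernel |] => u hu.
    exact: (proj1 (log_kernel_bound n u ltac:(lra))).
  - have := RInt_le (log_kernel z n) (fun _ => K * (/ alpha z) ^ n) 0 1 ltac:(lra)
      (ex_RInt_log_kernel z hz1 n) (ex_RInt_const _ _ _).
    rewrite RInt_const /scal /= /mult /= Rminus_0_r Rmult_1_l; apply => u hu.
    exact: (proj2 (log_kernel_bound n u ltac:(lra))).
Qed.

Lemma log_cf_error_factor n : L - p n / q n
  = z * (r ^ n * (alpha z ^ n * log_int z n) * (alpha z ^ n / log_den z n)).
Proof.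
  have := alpha_gt0; have := log_den_gt0 n => ? ?.
  rewrite log_cf_error_div.
  have -> : z ^ (2 * n + 1) = z * (r ^ n * alpha z ^ n * alpha z ^ n).
  { rewrite pow_add pow_mult -(alpha_mul_beta z); last lra.
    rewrite (Rpow_mult_distr (alpha z)) /r /Rdiv (Rpow_mult_distr (beta z)) pow_inv pow_1.
    by field; apply: pow_nonzero; lra. }
  field; lra.
Qed.

Lemma log_cf_error_bound n : Rabs (L - p n / q n) <= Rabs z * K * (INR (S n) * r ^ n).
Proof.
  have ha := pow_lt _ n alpha_gt0; have [hr0 _] := ratio_bounds; have hrn := pow_le _ n hr0.
  have [hI0 hI1] := log_int_bound n; have hD := log_den_gt0 n.
  have hIa : 0 <= alpha z ^ n * log_int z n <= K.
  { rewrite pow_inv in hI1; split; first by apply: Rmult_le_pos; lra.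
    apply: (Rmult_le_reg_r (/ alpha z ^ n)); first exact: Rinv_0_lt_compat.
    have -> : alpha z ^ n * log_int z n * / alpha z ^ n = log_int z n by field; lra.
    exact: hI1. }
  have hDa : 0 <= alpha z ^ n / log_den z n <= INR (S n).
  { split; first by apply: Rle_mult_inv_pos; lra.
    apply: (Rmult_le_reg_r (log_den z n)) => //; rewrite /Rdiv Rmult_assoc Rinv_l; last lra.
    have := log_den_ge n; have := cbin_ge_inv n; have := pos_INR (S n); nra. }
  rewrite log_cf_error_factor Rabs_mult (Rabs_pos_eq (_ * _)); last first.
  { by apply: Rmult_le_pos; [apply: Rmult_le_pos|]; lra. }
  have -> : Rabs z * K * (INR (S n) * r ^ n) = Rabs z * (r ^ n * K * INR (S n)) by ring.
  apply: Rmult_le_compat_l; first exact: Rabs_pos.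
  apply: Rmult_le_compat; [by apply: Rmult_le_pos; lra | lra | | lra].
  by apply: Rmult_le_compat_l; lra.
Qed.

Lemma log_cf_cvg : is_lim_seq (fun n => p n / q n) L.
Proof.
  have H : is_lim_seq (fun n => L - p n / q n) 0.
  { apply/is_lim_seq_abs_0.
    apply: (is_lim_seq_le_le (fun _ => 0) _ (fun n => Rabs z * K * (INR (S n) * r ^ n))).
    - by move=> n; split; [exact: Rabs_pos | exact: log_cf_error_bound].
    - exact: is_lim_seq_const.
    - have := is_lim_seq_scal_l _ (Rabs z * K) _ (is_lim_seq_INR_geom r ratio_bounds).
      by rewrite /= Rmult_0_r. }
  have := is_lim_seq_minus' _ _ _ _ (is_lim_seq_const L) H.
  by rewrite Rminus_0_r; apply: is_lim_seq_ext => n; ring.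
Qed.

Let rho := alpha z / z.
Let scaled_diff m := rho ^ (2 * m + 1) * (p (S m) / q (S m) - p m / q m).

Lemma log_cf_diff m :
  p (S m) / q (S m) - p m / q m
  = 2 * z ^ (2 * m + 1) / (INR (S m) * log_den z (S m) * log_den z m).
Proof.
  have := log_cf_q_gt0 m; have := log_cf_q_gt0 (S m); have := log_den_gt0 m.
  have := log_den_gt0 (S m); have : 0 < INR (fact m) by exact/lt_0_INR/lt_O_fact.
  have : 0 < INR (S m) by apply: lt_0_INR; lia.
  move=> ? ? ? ? ? ?.
  have -> : p (S m) / q (S m) - p m / q m = (p (S m) * q m - p m * q (S m)) / (q (S m) * q m).
  { field; lra. }
  rewrite log_cf_wronskian /q !log_cf_q; try lra.
  rewrite [fact (S m)]/fact -/fact mult_INR; field; lra.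
Qed.

Lemma log_den_tau n : log_den z n = alpha z ^ n * cbin n * tau n.
Proof. rewrite log_den_conv /tau; have := cbin_gt0 n => ?; field; lra. Qed.

Lemma tau_ge1 n : 1 <= tau n.
Proof.
  have := conv_cbin_geom_ge r ratio_bounds n; have := cbin_gt0 n => ? ?.
  apply: (Rmult_le_reg_r (cbin n)) => //; rewrite /tau /Rdiv Rmult_assoc Rinv_l; lra.
Qed.

Lemma scaled_diff_eq m :
  scaled_diff m = 2 / (INR (S m) * cbin (S m) * cbin m * tau (S m) * tau m).
Proof.
  have := cbin_gt0 m; have := cbin_gt0 (S m); have := tau_ge1 m; have := tau_ge1 (S m).
  have := pow_lt _ m alpha_gt0; have := alpha_gt0; have : 0 < INR (S m) by apply: lt_0_INR; lia.
  move=> ? ? ? ? ? ? ?.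
  rewrite /scaled_diff log_cf_diff !log_den_tau /rho /Rdiv Rpow_mult_distr pow_inv.
  have -> : (2 * m + 1 = S m + m)%nat by lia.
  rewrite !pow_add; have := pow_nonzero z m hz0 => ?.
  rewrite [alpha z ^ S m]/= [z ^ S m]/=.
  field; repeat split; lra.
Qed.

Lemma is_lim_seq_tau : is_lim_seq tau (Series (fun k => cbin k * r ^ k)).
Proof. exact: is_lim_seq_conv_cbin_geom ratio_bounds. Qed.

Lemma is_lim_seq_scaled_diff : is_lim_seq scaled_diff (2 * PI * (1 - r)).
Proof.
  set S := Series (fun k => cbin k * r ^ k).
  have hS : S * S = / (1 - r) := Series_cbin_geom_sq r ratio_bounds.
  have [hr0 hr1] := ratio_bounds; have := PI_RGT_0 => ?.
  have hS0 : S <> 0.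
  { move=> h0; rewrite h0 Rmult_0_r in hS; have := Rinv_0_lt_compat (1 - r) ltac:(lra); lra. }
  have hprod := is_lim_seq_mult' _ _ _ _
    (is_lim_seq_mult' _ _ _ _ is_lim_seq_wallis (proj1 (is_lim_seq_incr_1 _ _) is_lim_seq_tau))
    is_lim_seq_tau.
  have hnz : / PI * S * S <> 0.
  { repeat apply: Rmult_integral_contrapositive_currified => //.
    by apply: Rinv_neq_0_compat; lra. }
  have := is_lim_seq_div' _ _ _ _ (is_lim_seq_const 2) hprod hnz.
  have -> : 2 / (/ PI * S * S) = 2 * PI * (1 - r).
  { rewrite Rmult_assoc hS; field; lra. }
  by apply: is_lim_seq_ext => m; rewrite scaled_diff_eq.
Qed.

Lemma beta_neq0 : beta z <> 0.
Proof.
  move=> hb; apply: (pow_nonzero z 2 hz0).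
  by rewrite -alpha_mul_beta ?hb ?Rmult_0_r //; lra.
Qed.

Lemma rho_sq_mul_ratio : rho ^ 2 * r = 1.
Proof.
  have := alpha_gt0; have := beta_neq0 => ? ?.
  rewrite /rho /r /Rdiv Rpow_mult_distr pow_inv -(alpha_mul_beta z); last lra.
  field; lra.
Qed.

Lemma log_cf_error_series n :
  rho ^ (2 * n + 1) * (L - p n / q n) = Series (fun j => scaled_diff (n + j) * r ^ j).
Proof.
  have H := is_series_scal_l (rho ^ (2 * n + 1)) _ _ (is_series_telescope _ _ n log_cf_cvg).
  symmetry; apply: is_series_unique; apply: is_series_ext H => j.
  rewrite /scaled_diff.
  have -> : (2 * (n + j) + 1 = 2 * n + 1 + 2 * j)%nat by lia.
  have hrj : (rho ^ 2) ^ j * r ^ j = 1 by rewrite -Rpow_mult_distr rho_sq_mul_ratio pow1.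
  rewrite (pow_add rho (2 * n + 1)) pow_mult -{1}[scal _ _]Rmult_1_l -{1}hrj.
  rewrite /scal /= /mult /=; ring.
Qed.

Lemma log_cf_error_equiv :
  is_lim_seq (fun n => (L - p n / q n) / (2 * PI / rho ^ (2 * n + 1))) 1.
Proof.
  have [hr0 hr1] := ratio_bounds; have := PI_RGT_0 => ?.
  have hrho : rho <> 0.
  { have := alpha_gt0 => ?; apply: Rmult_integral_contrapositive_currified; first lra.
    exact: Rinv_neq_0_compat. }
  have := is_lim_seq_Series_shift_geom _ _ _ ratio_bounds is_lim_seq_scaled_diff.
  have -> : 2 * PI * (1 - r) / (1 - r) = 2 * PI by field; lra.
  move=> /(is_lim_seq_scal_r _ (/ (2 * PI))); rewrite [Rbar_mult _ _]/= Rinv_r; last lra.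
  apply: is_lim_seq_ext => n; rewrite -log_cf_error_series.
  have := pow_nonzero _ (2 * n + 1) hrho; have := log_cf_q_gt0 n => ? ?.
  by field; repeat split; first [assumption | lra].
Qed.

End LogContinuedFraction.

Theorem theorem7p1 (z : R) (hz1 : z < 1) (hz0 : z <> 0) :
  is_lim_seq (fun n => cf_p (log_a z) (log_b z) n / cf_q (log_a z) (log_b z) n)
    (- ln (1 - z))
  /\
  is_lim_seq
    (fun n =>
       (- ln (1 - z) - cf_p (log_a z) (log_b z) n / cf_q (log_a z) (log_b z) n)
       / (2 * PI / ((1 + sqrt (1 - z)) ^ 2 / z) ^ (2 * n + 1)))
    1.
Proof.
  split; [exact: log_cf_cvg | exact: log_cf_error_equiv].
Qed.
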